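(* For any graph $G$, $\gamma_{oidR}(G)\le 2\gamma_{oiR}(G)$, with equality if and only if $G=\overline{K_n}$ (the edgeless graph on $n$ vertices).
   Context: Graphs are finite and simple. A DRD function of $G$ is $f:V(G)\to\{0,1,2,3\}$ such that every vertex with value $0$ has a neighbor with value $3$ or two neighbors with value $2$, and every vertex with value $1$ has a neighbor with value at least $2$; it is an OIDRD function if the set of vertices with value $0$ is independent, and $\gamma_{oidR}(G)$ is the minimum weight $\sum_v f(v)$ of an OIDRD function. A Roman dominating function is $f:V(G)\to\{0,1,2\}$ such that every vertex with value $0$ has a neighbor with value $2$; it is an outer independent Roman dominating function (OIRD function) if the set of vertices with value $0$ is independent, and $\gamma_{oiR}(G)$ is the minimum weight of an OIRD function. *)

(* A finite simple graph is a symmetric irreflexive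
   relation e on a finite type T of vertices. *)
From mathcomp Require Import all_boot all_order.
Set Implicit Arguments. Unset Strict Implicit. Unset Printing Implicit Defensive.

Section Domination.
Variables (T : finType) (e : rel T).

Definition is_DRD (f : {ffun T -> 'I_4}) : bool :=
  [forall v,
    ((f v : nat) == 0) ==>
      ([exists u, e v u && ((f u : nat) == 3)] ||
       (2 <= #|[set u | e v u & (f u : nat) == 2]|))] &&
  [forall v,
    ((f v : nat) == 1) ==> [exists u, e v u && (2 <= (f u : nat))]].

Definition zeros_independent (n : nat) (f : {ffun T -> 'I_n}) : bool :=
  [forall u, forall v, e u v ==> ~~ (((f u : nat) == 0) && ((f v : nat) == 0))].

Definition is_OIDRD (f : {ffun T -> 'I_4}) : bool :=
  is_DRD f && zeros_independent f.

Definition is_RD (f : {ffun T -> 'I_3}) : bool :=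
  [forall v, ((f v : nat) == 0) ==> [exists u, e v u && ((f u : nat) == 2)]].

Definition is_OIRD (f : {ffun T -> 'I_3}) : bool :=
  is_RD f && zeros_independent f.

Definition weight (n : nat) (f : {ffun T -> 'I_n}) : nat := \sum_(v : T) (f v : nat).

(* Minimum weights. The constant 3 (resp. 2) function is always an OIDRD
   (resp. OIRD) function of weight 3|V| (resp. 2|V|), so these defaults
   never undercut the true minimum. *)
Definition gamma_oidR : nat :=
  \big[minn/3 * #|T|]_(f : {ffun T -> 'I_4} | is_OIDRD f) weight f.

Definition gamma_oiR : nat :=
  \big[minn/2 * #|T|]_(f : {ffun T -> 'I_3} | is_OIRD f) weight f.

End Domination.

From mathcomp Require Import all_boot all_order.
Import Order.TTheory.

(* Relabelling the values 1, 2 of an OIRD function f as 2, 3 gives an OIDRD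
   function of weight 2 w(f) - |f^-1(2)|, so gamma_oidR <= 2 gamma_oiR, with
   strict inequality as soon as some minimum OIRD function uses the value 2.
   If a minimum OIRD function f avoids 2, it avoids 0 as well, so
   gamma_oiR = |V|; then any edge vu yields the OIDRD function
   (u |-> 3, v |-> 0, everything else |-> 2) of weight 2|V| - 1, again a strict
   inequality.  On an edgeless graph every OIDRD function is at least 2
   everywhere while the constant 1 is an OIRD function, whence equality. *)

Section Weight.
Context {T : finType} {n : nat}.
Implicit Type f : {ffun T -> 'I_n}.

Lemma weight_le f k : (forall v, f v <= k) -> weight f <= k * #|T|.
Proof.
move=> le_fk; rewrite mulnC -sum_nat_const.
by apply: leq_sum => v _; apply: le_fk.
Qed.

Lemma weight_ge f k : (forall v, k <= f v) -> k * #|T| <= weight f.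
Proof.
move=> le_kf; rewrite mulnC -sum_nat_const.
by apply: leq_sum => v _; apply: le_kf.
Qed.

End Weight.

Section OuterIndependentDomination.
Context {T : finType} (e : rel T).

Lemma gamma_oidR_le f : is_OIDRD e f -> gamma_oidR e <= weight f.
Proof.
by move=> f_ok; have := bigmin_le_cond (3 * #|T|) (@weight T 4) f_ok;
  rewrite minEnat leEnat.
Qed.

Lemma gamma_oidR_ge m :
  m <= 3 * #|T| -> (forall f, is_OIDRD e f -> m <= weight f) ->
  m <= gamma_oidR e.
Proof.
move=> m_le m_lb; rewrite /gamma_oidR -minEnat -leEnat.
by apply/bigmin_geP; split; rewrite ?leEnat.
Qed.

Definition const_one : {ffun T -> 'I_3} := [ffun => Ordinal (isT : 1 < 3)].

Lemma is_OIRD_const_one : is_OIRD e const_one.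
Proof.
apply/andP; split; apply/forallP => u; rewrite ffunE //.
by apply/forallP => v; rewrite !ffunE implybT.
Qed.

Lemma gamma_oiR_le_card : gamma_oiR e <= #|T|.
Proof.
have := bigmin_le_cond (2 * #|T|) (@weight T 3) is_OIRD_const_one.
rewrite minEnat leEnat => /leq_trans; apply.
by rewrite -[#|T|]mul1n; apply: weight_le => v; rewrite ffunE.
Qed.

Lemma gamma_oiR_attained : exists2 f, is_OIRD e f & gamma_oiR e = weight f.
Proof.
have weight_le2 (f : {ffun T -> 'I_3}) : (weight f <= 2 * #|T|)%O.
  by rewrite leEnat; apply: weight_le => v; rewrite -ltnS.
have [f f_ok f_min] :=
  eq_bigmin _ _ _ is_OIRD_const_one (fun f _ => weight_le2 f).
by exists f; rewrite // /gamma_oiR -minEnat.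
Qed.

Lemma RD_no_two_positive (f : {ffun T -> 'I_3}) :
  is_RD e f -> (forall v, (f v : nat) != 2) -> forall v, 0 < f v.
Proof.
move=> /forallP f_RD no_two v; rewrite lt0n; apply/negP => fv0.
have /existsP [u /andP [_ fu2]] := implyP (f_RD v) fv0.
by move/negP: (no_two u).
Qed.

Definition drd_value (k : nat) : nat := if k == 0 then 0 else k.+1.

Lemma drd_value_eq0 k : (drd_value k == 0) = (k == 0).
Proof. by case: k. Qed.

Lemma drd_value_neq1 k : drd_value k != 1.
Proof. by case: k. Qed.

Definition oidrd_of_oird (f : {ffun T -> 'I_3}) : {ffun T -> 'I_4} :=
  [ffun v => inord (drd_value (f v))].

Lemma oidrd_of_oirdE f v : oidrd_of_oird f v = drd_value (f v) :> nat.
Proof. by rewrite ffunE inordK //; case: (f v) => [[|[|[|]]]]. Qed.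

Lemma is_OIDRD_of_OIRD f : is_OIRD e f -> is_OIDRD e (oidrd_of_oird f).
Proof.
move=> /andP [/forallP f_RD /forallP f_zi].
rewrite /is_OIDRD /is_DRD -andbA; apply/and3P; split; apply/forallP => v;
  rewrite ?oidrd_of_oirdE ?drd_value_eq0.
- apply/implyP => /(implyP (f_RD v)) /existsP [u /andP [evu fu2]].
  apply/orP; left; apply/existsP; exists u.
  by rewrite evu oidrd_of_oirdE (eqP fu2).
- by rewrite (negPf (drd_value_neq1 _)).
- apply/forallP => u.
  by rewrite !oidrd_of_oirdE !drd_value_eq0 (forallP (f_zi v)).
Qed.

Lemma weight_oidrd_of_oird f :
  weight (oidrd_of_oird f) + #|[set v | (f v : nat) == 2]| = 2 * weight f.
Proof.
rewrite /weight -sum1_card [X in _ + X]big_mkcond /= -big_split big_distrr /=.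
apply: eq_bigr => v _; rewrite inE oidrd_of_oirdE.
by case: (f v) => [[|[|[|]]]].
Qed.

Lemma gamma_oidR_le_double : gamma_oidR e <= 2 * gamma_oiR e.
Proof.
have [f f_ok ->] := gamma_oiR_attained.
rewrite -weight_oidrd_of_oird (leq_trans _ (leq_addr _ _)) //.
exact/gamma_oidR_le/is_OIDRD_of_OIRD.
Qed.

Section Edge.
Context {v u : T}.
Hypotheses (e_irr : irreflexive e) (evu : e v u).

Definition edge_star : {ffun T -> 'I_4} :=
  [ffun x => inord (if x == u then 3 else if x == v then 0 else 2)].

Lemma edge_starE x :
  edge_star x = (if x == u then 3 else if x == v then 0 else 2) :> nat.
Proof. by rewrite ffunE inordK //; case: eqP => //; case: eqP. Qed.

Lemma is_OIDRD_edge_star : is_OIDRD e edge_star.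
Proof.
rewrite /is_OIDRD /is_DRD -andbA; apply/and3P; split; apply/forallP => x;
  rewrite ?edge_starE.
- case: (x =P u) => //= _; case: (x =P v) => //= ->.
  by apply/orP; left; apply/existsP; exists u; rewrite evu edge_starE eqxx.
- by case: (x =P u); case: (x =P v).
- apply/forallP => y; apply/implyP => exy; rewrite !edge_starE.
  case: (x =P u) => //= _; case: (x =P v) => //= xv.
  case: (y =P u) => //= _; case: (y =P v) => //= yv.
  by move: exy; rewrite xv yv e_irr.
Qed.

Lemma weight_edge_star : (weight edge_star).+1 = 2 * #|T|.
Proof.
have neq_uv : u != v by apply: contraTneq evu => ->; rewrite e_irr.
have pointwise x : edge_star x + (x == v) + (x == v) = 2 + (x == u).
  rewrite edge_starE; case: eqP => [->|_]; rewrite ?(negPf neq_uv) //.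
  by case: eqP.
have sum_eq1 (w : T) : \sum_(x : T) (x == w) = 1.
  by rewrite (bigD1 w) //= eqxx big1 // => x /negPf ->.
have : \sum_(x : T) (edge_star x + (x == v) + (x == v)) =
       \sum_(x : T) (2 + (x == u)).
  by apply: eq_bigr => x _; apply: pointwise.
by rewrite !big_split /= sum_nat_const !sum_eq1 !addn1 mulnC => -[<-].
Qed.

Lemma gamma_oidR_lt_double_card : gamma_oidR e < 2 * #|T|.
Proof.
by rewrite -weight_edge_star ltnS gamma_oidR_le // is_OIDRD_edge_star.
Qed.

Lemma gamma_oidR_lt_double : gamma_oidR e < 2 * gamma_oiR e.
Proof.
have [f f_ok f_min] := gamma_oiR_attained.
case: (pickP (fun x => (f x : nat) == 2)) => [x fx2 | no_two].
  rewrite f_min -weight_oidrd_of_oird -addn1 leq_add //.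
    exact/gamma_oidR_le/is_OIDRD_of_OIRD.
  by apply/card_gt0P; exists x; rewrite inE.
have f_pos := RD_no_two_positive f (andP f_ok).1 (fun x => negbT (no_two x)).
rewrite (leq_trans gamma_oidR_lt_double_card) // leq_mul2l f_min.
by rewrite -[#|T|]mul1n weight_ge.
Qed.

End Edge.

Lemma DRD_isolated_ge2 f v :
  is_DRD e f -> (forall u, ~~ e v u) -> 2 <= f v.
Proof.
move=> /andP [/forallP D0 /forallP D1] isolated.
have no_nbr (P : pred T) : [exists u, e v u && P u] = false.
  by apply/existsP => -[u /andP [evu _]]; move/negP: (isolated u).
have no_twos : [set u | e v u & (f u : nat) == 2] = set0.
  by apply/setP => u; rewrite !inE (negPf (isolated u)).
move: (D0 v) (D1 v); rewrite !no_nbr no_twos cards0.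
by case: (f v) => [[|[|k]]].
Qed.

Lemma gamma_oidR_edgeless : (forall u v, ~~ e u v) -> 2 * #|T| <= gamma_oidR e.
Proof.
move=> edgeless; apply: gamma_oidR_ge; first by rewrite leq_mul2r orbT.
move=> f /andP [f_DRD _]; apply: weight_ge => v.
exact: DRD_isolated_ge2 f_DRD (edgeless v).
Qed.

End OuterIndependentDomination.

Theorem theorem3 (T : finType) (e : rel T)
  (e_sym : symmetric e) (e_irr : irreflexive e) :
  gamma_oidR e <= 2 * gamma_oiR e /\
  (gamma_oidR e = 2 * gamma_oiR e <-> forall u v : T, ~~ e u v).
Proof.
split; first exact: gamma_oidR_le_double.
split=> [eq_double u v | edgeless].
  apply/negP => euv; have := gamma_oidR_lt_double _ e_irr euv.
  by rewrite eq_double ltnn.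
apply/eqP; rewrite eqn_leq gamma_oidR_le_double.
apply: leq_trans (gamma_oidR_edgeless _ edgeless).
by rewrite leq_mul2l gamma_oiR_le_card orbT.
Qed.
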